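(* For any directed hypergraph with a directed hypergraph cellular sheaf (any charge $q\in\mathbb R$, stalk dimension $d$) such that every $D_u$ is positive definite, the normalized Directed Sheaf Hypergraph Laplacian $L^{\vec{\mathcal F}}_N$ is positive semidefinite.
   Context: A directed hypergraph is $\mathcal H=(V,E)$ with $n=|V|$, $m=|E|$, each hyperedge $e\in E$ a nonempty subset of $V$ partitioned into disjoint sets $T(e)$ (tail) and $H(e)$ (head) with $e=T(e)\cup H(e)$; $\delta_e:=|e|$. A directed hypergraph cellular sheaf with charge $q\in\mathbb R$ and stalk dimension $d$ consists of: for each $e\in E$, $u\in V$, the scalar $\mathcal S^{(q)}_{u\trianglelefteq e}=1$ if $u\in H(e)$, $=e^{-2\pi\mathbf i q}$ if $u\in T(e)$, $=0$ otherwise; for each incidence $u\in e$ a real matrix $\mathcal F_{u\trianglelefteq e}\in\mathbb R^{d\times d}$ and $\vec{\mathcal F}_{u\trianglelefteq e}:=\mathcal S^{(q)}_{u\trianglelefteq e}\mathcal F_{u\trianglelefteq e}$. Let $B^{(q)}\in\mathbb C^{md\times nd}$ have $d\times d$ block $(e,u)$ equal to $\vec{\mathcal F}_{u\trianglelefteq e}$ if $u\in e$ and $0$ otherwise; $D_E=\mathrm{diag}(\delta_1I_d,\dots,\delta_mI_d)$; $D_u:=\sum_{e\ni u}\mathcal F_{u\trianglelefteq e}^\top\mathcal F_{u\trianglelefteq e}$; $D_V=\mathrm{diag}(D_1,\dots,D_n)$. $L^{\vec{\mathcal F}}:=D_V-(B^{(q)})^\dagger D_E^{-1}B^{(q)}$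 and $L^{\vec{\mathcal F}}_N:=D_V^{-1/2}L^{\vec{\mathcal F}}D_V^{-1/2}$. *)

From HB Require Import structures.
From mathcomp Require Import all_boot all_order all_algebra.
From mathcomp Require Import complex.
From mathcomp Require Import boolp classical_sets reals trigo.
Set Implicit Arguments. Unset Strict Implicit. Unset Printing Implicit Defensive.
Import Order.TTheory GRing.Theory Num.Theory.
Local Open Scope ring_scope.

Section DirectedSheaf.
Variable R : realType.
Local Notation C := (R[i]).

Definition toC (x : R) : C := Complex x 0.
Definition mxC k l (A : 'M[R]_(k, l)) : 'M[C]_(k, l) := map_mx toC A.

Definition adjmx k l (A : 'M[C]_(k, l)) : 'M[C]_(l, k) :=
  (map_mx (fun z : C => z^*) A)^T.

Definition posdef k (A : 'M[R]_k) : Prop :=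
  A^T = A /\ forall x : 'cV[R]_k, x != 0 -> 0 < (x^T *m A *m x) 0 0.
Definition possemidef k (A : 'M[R]_k) : Prop :=
  A^T = A /\ forall x : 'cV[R]_k, 0 <= (x^T *m A *m x) 0 0.

(* complex Hermitian positive semidefinite: A^dagger = A and x^dagger A x >= 0
   (in the order of C, i.e. real and nonnegative) *)
Definition hermitian_psd k (A : 'M[C]_k) : Prop :=
  adjmx A = A /\ forall x : 'cV[C]_k, 0 <= (adjmx x *m A *m x) 0 0.

(* principal (positive semidefinite) square root of a real matrix, chosen
   classically among the symmetric PSD matrices S with S S = A
   (0 if none exists). *)
Definition psd_sqrt k (A : 'M[R]_k) : 'M[R]_k :=
  xget 0 [set S : 'M[R]_k | possemidef S /\ S *m S = A].

(* Directed hypergraph on vertices 'I_n with hyperedges 'I_m: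
   tail T e and head H e; e = T e :|: H e. *)
Variables (n m d : nat) (T H : 'I_m -> {set 'I_n}).
Variable (q : R).
Variable (F : 'I_m -> 'I_n -> 'M[R]_d).

Definition edge (e : 'I_m) : {set 'I_n} := T e :|: H e.
Definition delta (e : 'I_m) : nat := #|edge e|.

(* e^{-2 pi i q} = cos(2 pi q) - i sin(2 pi q) *)
Definition phase : C := Complex (cos (2 * pi * q)) (- sin (2 * pi * q)).

Definition Sq (e : 'I_m) (u : 'I_n) : C :=
  if u \in H e then 1 else if u \in T e then phase else 0.

Definition Fvec (e : 'I_m) (u : 'I_n) : 'M[C]_d := Sq e u *: mxC (F e u).

Definition Bq : 'M[C]_(\sum_(e < m) d, \sum_(u < n) d) :=
  \mxblock_(e < m, u < n) (if u \in edge e then Fvec e u else 0).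

Definition DE : 'M[C]_(\sum_(e < m) d) :=
  \mxdiag_(e < m) ((delta e)%:R%:M : 'M[C]_d).

Definition Du (u : 'I_n) : 'M[R]_d :=
  \sum_(e < m | u \in edge e) (F e u)^T *m F e u.

Definition DV : 'M[R]_(\sum_(u < n) d) := \mxdiag_(u < n) Du u.

Definition sheafLap : 'M[C]_(\sum_(u < n) d) :=
  mxC DV - adjmx Bq *m invmx DE *m Bq.

Definition DV_invsqrt : 'M[R]_(\sum_(u < n) d) := invmx (psd_sqrt DV).

Definition sheafLapN : 'M[C]_(\sum_(u < n) d) :=
  mxC DV_invsqrt *m sheafLap *m mxC DV_invsqrt.

End DirectedSheaf.

(* Writing x_u for the block of x at vertex u and z_(e,u) := F_(u<|e) x_u, the unit phases
   cancel in x^dagger L x, which becomes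
     sum_e ( sum_(u in e) |z_(e,u)|^2 - |sum_(u in e) z_(e,u)|^2 / delta_e ),
   a sum of nonnegative terms by the Cauchy-Schwarz (variance) inequality. The normalized
   Laplacian is a congruence X^dagger L X of L by the real symmetric matrix X = D_V^(-1/2),
   so it inherits positive semidefiniteness. *)
From HB Require Import structures.
From mathcomp Require Import all_boot all_order all_algebra.
From mathcomp Require Import complex.
From mathcomp Require Import boolp classical_sets reals trigo.
From mathcomp Require Import ring.
Set Implicit Arguments. Unset Strict Implicit. Unset Printing Implicit Defensive.
Import Order.TTheory GRing.Theory Num.Theory.
Local Open Scope ring_scope.

Lemma map_mxdiag (V W : nmodType) (p : nat) (p_ : 'I_p -> nat)
    (f : {additive V -> W}) (D : forall i, 'M[V]_(p_ i)) :
  map_mx f (\mxdiag_i D i) = \mxdiag_i map_mx f (D i).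
Proof.
apply/matrixP => i j; rewrite /mxdiag !mxE.
case: ifP => _; last by rewrite !mxE raddf0.
by rewrite -[in RHS](map_mx0 f) -map_conform_mx mxE.
Qed.

Lemma mul_mxdiag (K : pzRingType) (p : nat) (p_ : 'I_p -> nat)
    (A B : forall i, 'M[K]_(p_ i)) :
  \mxdiag_i A i *m \mxdiag_i B i = \mxdiag_i (A i *m B i).
Proof.
rewrite {1}/mxdiag mul_mxblock_mxdiag /mxdiag; apply: eq_mxblock => i j.
case: eqP => [->|_]; last by rewrite mul0mx.
by rewrite !conform_mx_id.
Qed.

Section ComplexMatrices.
Variable R : realType.
Local Notation C := (R[i]).

Lemma adjmxM k l p (A : 'M[C]_(k, l)) (B : 'M[C]_(l, p)) :
  adjmx (A *m B) = adjmx B *m adjmx A.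
Proof. by rewrite /adjmx map_mxM trmx_mul. Qed.

Lemma adjmxB k l (A B : 'M[C]_(k, l)) : adjmx (A - B) = adjmx A - adjmx B.
Proof. by rewrite /adjmx map_mxB linearB. Qed.

Lemma adjmx_sum k l (I : finType) (P : pred I) (A : I -> 'M[C]_(k, l)) :
  adjmx (\sum_(i | P i) A i) = \sum_(i | P i) adjmx (A i).
Proof.
apply/matrixP => i j; rewrite !mxE !summxE rmorph_sum /=.
by apply: eq_bigr => a _; rewrite !mxE.
Qed.

Lemma adjmxZ k l (a : C) (A : 'M[C]_(k, l)) : adjmx (a *: A) = a^* *: adjmx A.
Proof. by apply/matrixP => i j; rewrite !mxE rmorphM. Qed.

Lemma adjmxK k l (A : 'M[C]_(k, l)) : adjmx (adjmx A) = A.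
Proof. by apply/matrixP => i j; rewrite !mxE conjCK. Qed.

Lemma mxC_mul k l p (A : 'M[R]_(k, l)) (B : 'M[R]_(l, p)) :
  mxC (A *m B) = mxC A *m mxC B.
Proof. exact: (map_mxM (real_complex R)). Qed.

Lemma mxC_sum k l (I : finType) (P : pred I) (A : I -> 'M[R]_(k, l)) :
  mxC (\sum_(i | P i) A i) = \sum_(i | P i) mxC (A i).
Proof. exact: (map_mx_sum (real_complex R)). Qed.

Lemma mxC_mxdiag (p : nat) (p_ : 'I_p -> nat) (D : forall i, 'M[R]_(p_ i)) :
  mxC (\mxdiag_i D i) = \mxdiag_i mxC (D i).
Proof. exact: (map_mxdiag (real_complex R)). Qed.

Lemma adjmx_mxC k l (A : 'M[R]_(k, l)) : adjmx (mxC A) = mxC A^T.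
Proof.
apply/matrixP => i j; rewrite !mxE.
by apply: conj_Creal; rewrite /toC complex_real.
Qed.

Lemma adjmx_mxcol (p : nat) (p_ : 'I_p -> nat) k (X : forall i, 'M[C]_(p_ i, k)) :
  adjmx (\mxcol_i X i) = \mxrow_i adjmx (X i).
Proof. by apply/matrixP => i j; rewrite !mxE. Qed.

Lemma adjmx_mxdiag (p : nat) (p_ : 'I_p -> nat) (D : forall i, 'M[C]_(p_ i)) :
  adjmx (\mxdiag_i D i) = \mxdiag_i adjmx (D i).
Proof. by rewrite /adjmx (map_mxdiag Num.conj) tr_mxdiag. Qed.

Lemma hermitian_psd_congr k l (A : 'M[C]_k) (X : 'M[C]_(k, l)) :
  hermitian_psd A -> hermitian_psd (adjmx X *m A *m X).
Proof.
move=> [A_herm A_ge0]; split; first by rewrite !adjmxM adjmxK A_herm mulmxA.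
move=> x; have -> : adjmx x *m (adjmx X *m A *m X) *m x =
                   adjmx (X *m x) *m A *m (X *m x) by rewrite adjmxM !mulmxA.
exact: A_ge0.
Qed.

Definition hdot k (a b : 'cV[C]_k) : C := (adjmx a *m b) 0 0.

Lemma hdot_ge0 k (a : 'cV[C]_k) : 0 <= hdot a a.
Proof.
rewrite /hdot mxE; apply: sumr_ge0 => i _; rewrite !mxE mulrC.
exact: mul_conjC_ge0.
Qed.

Lemma hdotBl k (a b c : 'cV[C]_k) : hdot (a - b) c = hdot a c - hdot b c.
Proof. by rewrite /hdot adjmxB mulmxBl mxE [X in _ + X]mxE. Qed.

Lemma hdotBr k (a b c : 'cV[C]_k) : hdot a (b - c) = hdot a b - hdot a c.
Proof. by rewrite /hdot mulmxBr mxE [X in _ + X]mxE. Qed.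

Lemma hdot_suml k (I : finType) (P : pred I) (a : I -> 'cV[C]_k) b :
  hdot (\sum_(i | P i) a i) b = \sum_(i | P i) hdot (a i) b.
Proof. by rewrite /hdot adjmx_sum mulmx_suml summxE. Qed.

Lemma hdot_sumr k (I : finType) (P : pred I) (a : I -> 'cV[C]_k) b :
  hdot b (\sum_(i | P i) a i) = \sum_(i | P i) hdot b (a i).
Proof. by rewrite /hdot mulmx_sumr summxE. Qed.

Lemma sum_hdot_diff k (I : finType) (S : {set I}) (z : I -> 'cV[C]_k) :
  \sum_(u in S) \sum_(v in S) hdot (z u - z v) (z u - z v) =
  2%:R * (#|S|%:R * \sum_(u in S) hdot (z u) (z u)
          - hdot (\sum_(u in S) z u) (\sum_(u in S) z u)).
Proof.
set a := \sum_(u in S) hdot (z u) (z u).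
have -> : hdot (\sum_(u in S) z u) (\sum_(u in S) z u) =
          \sum_(u in S) \sum_(v in S) hdot (z u) (z v).
  by rewrite hdot_suml; apply: eq_bigr => u _; rewrite hdot_sumr.
set b := \sum_(u in S) \sum_(v in S) hdot (z u) (z v).
have b_sym : \sum_(u in S) \sum_(v in S) hdot (z v) (z u) = b by rewrite exchange_big.
have diag : \sum_(u in S) \sum_(v in S) (hdot (z u) (z u) + hdot (z v) (z v)) =
            a *+ #|S| + a *+ #|S|.
  under eq_bigr do rewrite big_split sumr_const.
  by rewrite big_split sumr_const sumrMnl.
transitivity (\sum_(u in S) \sum_(v in S) (hdot (z u) (z u) + hdot (z v) (z v))
  - (b + \sum_(u in S) \sum_(v in S) hdot (z v) (z u))).
  rewrite -big_split -sumrB; apply: eq_bigr => u _.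
  rewrite -big_split -sumrB; apply: eq_bigr => v _.
  rewrite /= !hdotBl !hdotBr; ring.
by rewrite diag b_sym -mulr_natl; ring.
Qed.

Lemma hdot_sum_le (I : finType) k (S : {set I}) (z : I -> 'cV[C]_k) :
  (0 < #|S|)%N ->
  (#|S|%:R)^-1 * hdot (\sum_(u in S) z u) (\sum_(u in S) z u)
    <= \sum_(u in S) hdot (z u) (z u).
Proof.
move=> S_gt0; rewrite -subr_ge0.
have S_neq0 : (#|S|%:R : C) != 0 by rewrite pnatr_eq0 -lt0n.
have dev_ge0 : 0 <= #|S|%:R * \sum_(u in S) hdot (z u) (z u)
                    - hdot (\sum_(u in S) z u) (\sum_(u in S) z u).
  rewrite -(pmulr_rge0 _ (ltr0n C 2)) -sum_hdot_diff.
  by apply: sumr_ge0 => u _; apply: sumr_ge0 => v _; apply: hdot_ge0.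
rewrite -[X in X - _](mulKf S_neq0) -mulrBr.
by rewrite mulr_ge0 // invr_ge0 ler0n.
Qed.

Lemma psd_sqrt_sym k (A : 'M[R]_k) : (psd_sqrt A)^T = psd_sqrt A.
Proof.
rewrite /psd_sqrt; case: xgetP => [S _ [[-> _] _]|_]; first by [].
by rewrite trmx0.
Qed.

End ComplexMatrices.

Section DirectedSheafLaplacian.
Variables (R : realType) (n m d : nat) (T H : 'I_m -> {set 'I_n}) (q : R).
Variable F : 'I_m -> 'I_n -> 'M[R]_d.
Local Notation C := (R[i]).
Local Notation E := (edge T H).
Local Notation B := (Bq T H q F).
Local Notation L := (sheafLap T H q F).

Hypothesis delta_gt0 : forall e, (0 < delta T H e)%N.

Lemma phase_unit : (phase q)^* * phase q = 1.
Proof. by rewrite -normCKC normc_def /phase /= sqrrN cos2Dsin2 sqrtr1 expr1n. Qed.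

Lemma Sq_unit e u : u \in E e -> (Sq T H q e u)^* * Sq T H q e u = 1.
Proof.
rewrite /Sq /edge finset.in_setU => u_e.
case: ifP => u_H; first by rewrite conjC1 mulr1.
case: ifP => u_T; first exact: phase_unit.
by move: u_e; rewrite u_H u_T.
Qed.

Lemma adjFvecM_Fvec e u : u \in E e ->
  adjmx (Fvec T H q F e u) *m Fvec T H q F e u = mxC ((F e u)^T *m F e u).
Proof.
move=> u_e; rewrite /Fvec adjmxZ adjmx_mxC -scalemxAl -scalemxAr scalerA.
by rewrite Sq_unit // scale1r mxC_mul.
Qed.

Lemma DV_sym : (DV T H F)^T = DV T H F.
Proof.
rewrite /DV tr_mxdiag; apply: eq_mxdiag => u; rewrite /Du raddf_sum /=.
by apply: eq_bigr => e _; rewrite trmx_mul trmxK.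
Qed.

Lemma invmx_DE :
  invmx (DE R d T H) = \mxdiag_(e < m) (((delta T H e)%:R^-1 : C)%:M : 'M[C]_d).
Proof.
set D' := mxdiag _.
have DE_D' : DE R d T H *m D' = 1%:M.
  rewrite /DE /D' mul_mxdiag -(mxdiagZ (p_ := fun _ : 'I_m => d) (1 : C)).
  by apply: eq_mxdiag => e; rewrite -scalar_mxM mulfV // pnatr_eq0 -lt0n.
have [DE_unit _] := mulmx1_unit DE_D'.
by rewrite -[RHS](mulKmx DE_unit D') DE_D' mulmx1.
Qed.

Lemma adjmx_invmx_DE : adjmx (invmx (DE R d T H)) = invmx (DE R d T H).
Proof.
rewrite invmx_DE adjmx_mxdiag; apply: eq_mxdiag => e; apply/matrixP => i j.
by rewrite !mxE rmorphMn /= fmorphV /= conjC_nat eq_sym.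
Qed.

Lemma sheafLap_herm : adjmx L = L.
Proof.
by rewrite /sheafLap adjmxB !adjmxM adjmxK adjmx_mxC DV_sym adjmx_invmx_DE mulmxA.
Qed.

Section QuadraticForm.
Variable x : 'cV[C]_(\sum_(u < n) d).
Local Notation xs u := (submxcol x u).
Local Notation z e u := (Fvec T H q F e u *m xs u).

Lemma quad_DV : adjmx x *m mxC (DV T H F) *m x =
  \sum_e \sum_(u in E e) adjmx (z e u) *m z e u.
Proof.
rewrite -[in LHS](submxcolK x) adjmx_mxcol /DV mxC_mxdiag mul_mxrow_mxdiag.
rewrite mul_mxrow_mxcol (exchange_big_dep predT) //=; apply: eq_bigr => u _.
rewrite /Du mxC_sum mulmx_sumr mulmx_suml; apply: eq_bigr => e u_e.
by rewrite adjmxM -!mulmxA (mulmxA (adjmx (Fvec T H q F e u))) adjFvecM_Fvec.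
Qed.

Lemma Bq_mulmx : B *m x = \mxcol_e \sum_(u in E e) z e u.
Proof.
rewrite -[in LHS](submxcolK x) /B mul_mxblock_mxrow; apply: eq_mxcol => e.
rewrite [RHS]big_mkcond; apply: eq_bigr => u _.
by case: ifP; rewrite ?mul0mx.
Qed.

Lemma quad_BDB :
  adjmx x *m (adjmx B *m invmx (DE R d T H) *m B) *m x =
  \sum_e (delta T H e)%:R^-1 *:
    (adjmx (\sum_(u in E e) z e u) *m \sum_(u in E e) z e u).
Proof.
rewrite !mulmxA -adjmxM -!mulmxA Bq_mulmx invmx_DE adjmx_mxcol mulmxA.
rewrite mul_mxrow_mxdiag mul_mxrow_mxcol.
by apply: eq_bigr => e _; rewrite mul_mx_scalar scalemxAl.
Qed.

Lemma sheafLap_quad_ge0 : 0 <= (adjmx x *m L *m x) 0 0.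
Proof.
rewrite /sheafLap mulmxBr mulmxBl quad_DV quad_BDB -sumrB summxE.
apply: sumr_ge0 => e _; rewrite mxE [X in _ + X]mxE [X in _ - X]mxE subr_ge0 summxE.
exact: hdot_sum_le (delta_gt0 e).
Qed.

End QuadraticForm.

Lemma sheafLap_psd : hermitian_psd L.
Proof. by split; [exact: sheafLap_herm | exact: sheafLap_quad_ge0]. Qed.

End DirectedSheafLaplacian.

Theorem corollary1 (R : realType) (n m d : nat) (T H : 'I_m -> {set 'I_n})
    (q : R) (F : 'I_m -> 'I_n -> 'M[R]_d) :
  (forall e, [disjoint T e & H e]) ->
  (forall e, edge T H e != finset.set0) ->
  (forall u, posdef (Du T H F u)) ->
  hermitian_psd (sheafLapN T H q F).
Proof.
move=> _ edge_neq0 _.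
have delta_gt0 e : (0 < delta T H e)%N by rewrite /delta card_gt0.
have X_herm : adjmx (mxC (DV_invsqrt T H F)) = mxC (DV_invsqrt T H F).
  by rewrite adjmx_mxC /DV_invsqrt trmx_inv psd_sqrt_sym.
rewrite /sheafLapN -{1}X_herm.
exact/hermitian_psd_congr/sheafLap_psd.
Qed.
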